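(* For each equivalence class of the relation $\alpha\sim\gamma\iff\mathsf{rajcode}(\alpha)=\mathsf{rajcode}(\gamma)$ on weak compositions, there is a unique snowy $\alpha$ in the class. Moreover, if $\gamma\sim\alpha$ and $\alpha$ is snowy, then $\gamma_r\ge\alpha_r$ for all $r$.
   Context: A weak composition is an infinite sequence of nonnegative integers with finitely many positive entries; it is snowy if its positive entries are distinct. $D(\alpha)=\{(r,c):1\le c\le\alpha_r\}$ ($(r,c)$ in row $r$, row 1 on top, column $c$). For a diagram $D$, $\mathsf{snow}(D)$ is built by iterating through rows from bottom to top: in row $r$ take the rightmost cell $(r,c)\in D$ such that column $c$ contains no dark cloud yet; if it exists label it a dark cloud and add snowflake cells at $(r',c)$ for all $r'<r$ with $(r',c)\notin D$. $\mathsf{rajcode}(\alpha)$ is the weak composition whose $i$-th entry is the number of cells of $\mathsf{snow}(D(\alpha))$ in row $i$. *)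

From mathcomp Require Import all_boot.
Set Implicit Arguments. Unset Strict Implicit. Unset Printing Implicit Defensive.

(* A weak composition alpha = (alpha_1, alpha_2, ...) is represented by a
   finite list s : seq nat, padded with zeros: alpha_{i+1} = nth 0 s i.
   Two lists represent the same weak composition iff they agree at every
   index (i.e. differ only by trailing zeros). *)
Definition wc_eq (s t : seq nat) : Prop := forall i, nth 0 s i = nth 0 t i.

Definition snowy (s : seq nat) : Prop :=
  forall i j, i <> j -> 0 < nth 0 s i -> nth 0 s i <> nth 0 s j.

(* Columns of the dark clouds of snow(D(alpha)), computed by processing rows
   from bottom to top: for the list a :: t, the rows of t (lower rows) are
   processed first, then row a, where the rightmost cell (r,c), 1 <= c <= a,
   whose column c has no dark cloud yet becomes a dark cloud. *)
Fixpoint dark_cols (s : seq nat) : seq nat :=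
  match s with
  | [::] => [::]
  | a :: t =>
      let d := dark_cols t in
      match [seq c <- rev (iota 1 a) | c \notin d] with
      | c :: _ => c :: d
      | [::] => d
      end
  end.

(* Number of cells of snow(D(alpha)) in each row: the a cells of D in the row,
   plus one snowflake for each dark cloud strictly below the row lying in a
   column c not in D in this row (i.e. c > a). *)
Fixpoint rajcode (s : seq nat) : seq nat :=
  match s with
  | [::] => [::]
  | a :: t => (a + count (fun c => a < c) (dark_cols t)) :: rajcode t
  end.

From mathcomp Require Import all_boot zify.
Set Implicit Arguments. Unset Strict Implicit.

(* Let [d] be the (duplicate-free) dark-cloud columns of the rows below a row
   of length [x].  The row's rajcode entry is [raj_entry d x], and its dark
   cloud sits in column [cloud_col d x], the rightmost column [<= x] outside
   [d] ([0] meaning no dark cloud).  As [x] grows, [raj_entry d x] goes up by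
   one at columns outside [d] and stays put at columns in [d].  Hence
   replacing each row length by its dark-cloud column keeps the dark clouds
   and the rajcode, is entrywise smaller, and gives a snowy composition; and
   in a snowy composition every row length lies outside [d], where
   [raj_entry d] is injective, so the rows are recovered from the rajcode one
   at a time from the bottom. *)

Definition cloud_col (d : seq nat) (a : nat) : nat :=
  head 0 [seq c <- rev (iota 1 a) | c \notin d].

Definition raj_entry (d : seq nat) (x : nat) : nat :=
  x + count (fun c => x < c) d.

Section CloudColumn.

Variable d : seq nat.

Lemma cloud_colS a :
  cloud_col d a.+1 = if a.+1 \notin d then a.+1 else cloud_col d a.
Proof.
rewrite /cloud_col -{1}[a.+1]addn1 iotaD rev_cat /= add1n.
by case: ifP.
Qed.

Lemma cloud_col_le a : cloud_col d a <= a.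
Proof. by elim: a => // a IH; rewrite cloud_colS; case: ifP => // _; lia. Qed.

Lemma cloud_col_notin a : 0 < cloud_col d a -> cloud_col d a \notin d.
Proof. by elim: a => // a IH; rewrite cloud_colS; case: ifP. Qed.

Lemma cloud_col_id a : a \notin d -> cloud_col d a = a.
Proof. by case: a => // a; rewrite cloud_colS => ->. Qed.

Hypothesis d_uniq : uniq d.

Lemma raj_entryS x : raj_entry d x.+1 = raj_entry d x + (x.+1 \notin d).
Proof.
have splitS u : count (fun c => x < c) u =
    count (fun c => x.+1 < c) u + count_mem x.+1 u.
  by elim: u => //= c u ->; case: ltngtP => /=; lia.
rewrite /raj_entry splitS count_uniq_mem //.
by case: (x.+1 \in d) => /=; lia.
Qed.

Lemma raj_entry_mono : {homo raj_entry d : x y / x <= y}.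
Proof.
by apply: homo_leq => [//|y x z|x]; [apply: leq_trans | rewrite raj_entryS leq_addr].
Qed.

Lemma raj_entry_lt x y : x < y -> y \notin d -> raj_entry d x < raj_entry d y.
Proof.
case: y => // y xy yd; rewrite raj_entryS yd addn1 ltnS.
exact: raj_entry_mono.
Qed.

Lemma raj_entry_inj : {in [predC d] &, injective (raj_entry d)}.
Proof.
move=> x y xd yd Exy; have [xy|yx|//] := ltngtP x y.
- by have := raj_entry_lt xy yd; rewrite Exy ltnn.
- by have := raj_entry_lt yx xd; rewrite Exy ltnn.
Qed.

Lemma raj_entry_cloud_col a : raj_entry d (cloud_col d a) = raj_entry d a.
Proof.
elim: a => // a IH; rewrite cloud_colS.
by case: ifP => // ad; rewrite raj_entryS ad addn0.
Qed.

End CloudColumn.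

Lemma dark_cols_cons a t : dark_cols (a :: t) =
  let c := cloud_col (dark_cols t) a in if 0 < c then c :: dark_cols t else dark_cols t.
Proof.
rewrite /= /cloud_col.
case def_l: [seq c <- _ | _] => [|c l] //=.
have : c \in c :: l by rewrite mem_head.
by rewrite -def_l mem_filter mem_rev mem_iota => /andP [_ /andP [-> _]].
Qed.

Lemma dark_cols_uniq s : uniq (dark_cols s).
Proof.
elim: s => // a t IH; rewrite dark_cols_cons /=.
by case: ifP => // /cloud_col_notin /= ->.
Qed.

Lemma snowy_cons x t : snowy (x :: t) <-> snowy t /\ (0 < x -> x \notin t).
Proof.
split=> [S | [S xt]].
- split=> [i j ij | x_gt0]; first by apply: (S i.+1 j.+1); case.
  apply/negP => /(nthP 0) [j _ tj].
  by apply: (S 0 j.+1 _ x_gt0) => //=; rewrite tj.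
- have mem_nth_pos j : 0 < nth 0 t j -> nth 0 t j \in t.
    by move=> tj_gt0; rewrite mem_nth // ltnNge; apply: contraTN tj_gt0 => /(nth_default 0) ->.
  move=> [|i] [|j] //= ij.
  + by move=> x_gt0 xtj; move: (xt x_gt0); rewrite xtj mem_nth_pos // -xtj.
  + by move=> ti_gt0 tix; move: (xt); rewrite -tix mem_nth_pos // => /(_ ti_gt0).
  + by apply: S => eij; apply: ij; rewrite eij.
Qed.

Lemma snowyE s : snowy s <-> uniq [seq c <- s | 0 < c].
Proof.
elim: s => [|x t IH]; first by split=> // _ [|i] [|j].
rewrite snowy_cons IH /=; case: posnP => [-> | x_gt0] /=.
- by split=> [[]|].
- by rewrite mem_filter x_gt0; split=> [[-> ->] | /andP [-> ->]].
Qed.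

Lemma dark_cols_snowy s : snowy s -> dark_cols s = [seq c <- s | 0 < c].
Proof.
elim: s => // x t IH /snowy_cons [/IH dt xt].
rewrite dark_cols_cons /= dt cloud_col_id //.
by rewrite mem_filter; apply/andP => [[/xt/negP]].
Qed.

Lemma snowy_head_notin x t : snowy (x :: t) -> x \notin dark_cols t.
Proof.
case/snowy_cons => St xt; rewrite dark_cols_snowy // mem_filter.
by apply/andP => [[/xt/negP]].
Qed.

Fixpoint cloud_comp (s : seq nat) : seq nat :=
  if s is a :: t then cloud_col (dark_cols t) a :: cloud_comp t else [::].

Lemma dark_cols_cloud_comp s : dark_cols s = [seq c <- cloud_comp s | 0 < c].
Proof.
by elim: s => // a t IH; rewrite dark_cols_cons /=; case: ifP; rewrite IH.
Qed.

Lemma snowy_cloud_comp s : snowy (cloud_comp s).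
Proof. by rewrite snowyE -dark_cols_cloud_comp dark_cols_uniq. Qed.

Lemma rajcode_cloud_comp s : rajcode (cloud_comp s) = rajcode s.
Proof.
elim: s => // a t IH /=.
rewrite IH (dark_cols_snowy (@snowy_cloud_comp t)) -dark_cols_cloud_comp.
by congr (_ :: _); apply: raj_entry_cloud_col; apply: dark_cols_uniq.
Qed.

Lemma nth_cloud_comp_le s r : nth 0 (cloud_comp s) r <= nth 0 s r.
Proof. by elim: s r => [|a t IH] [|r] //=; apply: cloud_col_le. Qed.

Lemma nth_rajcode_ge s r : nth 0 s r <= nth 0 (rajcode s) r.
Proof. by elim: s r => [|a t IH] [|r] //=; apply: leq_addr. Qed.

Lemma wc_eq_sym s t : wc_eq s t -> wc_eq t s.
Proof. by move=> st i. Qed.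

Lemma wc_eq_cons x y s t : wc_eq (x :: s) (y :: t) <-> x = y /\ wc_eq s t.
Proof.
split=> [st | [-> st] [|i] //=].
by split=> [|i]; [apply: (st 0) | apply: (st i.+1)].
Qed.

Lemma wc_eq0_rajcode s : wc_eq [::] (rajcode s) -> wc_eq [::] s.
Proof.
by move=> rs0 r; have := nth_rajcode_ge s r; rewrite -rs0 nth_nil leqn0 => /eqP ->.
Qed.

Lemma wc_eq0_filter s : wc_eq [::] s -> [seq c <- s | 0 < c] = [::].
Proof.
move=> s0; rewrite -(filter_pred0 s).
by apply: eq_in_filter => _ /(nthP 0) [i _ <-]; rewrite -s0 nth_nil.
Qed.

Lemma wc_eq_filter s t :
  wc_eq s t -> [seq c <- s | 0 < c] = [seq c <- t | 0 < c].
Proof.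
elim: s t => [|x s IH] [|y t] // st.
- by rewrite [RHS]wc_eq0_filter.
- by rewrite [LHS]wc_eq0_filter //; apply: wc_eq_sym.
- by case/wc_eq_cons: st => -> /IH /= ->.
Qed.

Lemma snowy_rajcode_inj a b :
  snowy a -> snowy b -> wc_eq (rajcode a) (rajcode b) -> wc_eq a b.
Proof.
elim: a b => [|x a IH] [|y b] Sxa Syb //.
- exact: wc_eq0_rajcode.
- by move/wc_eq_sym/wc_eq0_rajcode/wc_eq_sym.
move: (Sxa) (Syb) => /snowy_cons [Sa _] /snowy_cons [Sb _].
case/wc_eq_cons => /= rxy /(IH b Sa Sb) ab.
have dab : dark_cols a = dark_cols b by rewrite !dark_cols_snowy // (wc_eq_filter ab).
suff -> : x = y by apply/wc_eq_cons.
apply: (@raj_entry_inj (dark_cols a)); rewrite ?inE ?dark_cols_uniq //.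
- exact: snowy_head_notin.
- by rewrite dab; apply: snowy_head_notin.
- by rewrite /raj_entry [in RHS]dab.
Qed.

Theorem lemma4p5 :
  (* every class contains a snowy weak composition *)
  (forall g : seq nat, exists a : seq nat,
      snowy a /\ wc_eq (rajcode a) (rajcode g)) /\
  (* it is unique *)
  (forall a b : seq nat, snowy a -> snowy b ->
      wc_eq (rajcode a) (rajcode b) -> wc_eq a b) /\
  (* the snowy representative is entrywise minimal *)
  (forall a g : seq nat, snowy a -> wc_eq (rajcode g) (rajcode a) ->
      forall r, nth 0 a r <= nth 0 g r).
Proof.
split; [|split].
- move=> g; exists (cloud_comp g).
  by rewrite rajcode_cloud_comp; split=> [|i]; first exact: snowy_cloud_comp.
- exact: snowy_rajcode_inj.
- move=> a g Sa ga r.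
  have := snowy_rajcode_inj (@snowy_cloud_comp g) Sa.
  rewrite rajcode_cloud_comp => /(_ ga r) <-.
  exact: nth_cloud_comp_le.
Qed.
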